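(* Let $\mathbb{K}$ be a semiring. Every two-way $\mathbb{K}$-automaton admits a $\delta$-local in-covering.
   Context: With $A_{\vdash\dashv}=A\cup\{\vdash,\dashv\}$ ($\vdash,\dashv$ fresh end-markers), a two-way $\mathbb{K}$-automaton $(Q,A,E,I,T)$ has finite state set $Q$, partial functions $I,T:Q\to\mathbb{K}$ (supports $\underline I$, $\underline T$: initial/final states), and a partial function $E:Q\times(A_{\vdash\dashv}\times\{-1,+1\})\times Q\to\mathbb{K}$ whose support $\underline E$ (the transitions) contains no $(p,\vdash,-1,q)$ nor $(p,\dashv,+1,q)$. For $t=(p,a,d,q)$: $\sigma(t)=p$, $\tau(t)=q$, $\delta(t)=d$. A two-way automaton is $\delta$-local if for each state $p$ all transitions outgoing from $p$ have the same direction $\delta$. A morphism from $\mathcal{A}=(Q,A,E,I,T)$ to $\mathcal{B}=(R,A,F,J,U)$ is a map $\varphi:Q\to R$ with $J(\varphi(p))=I(p)$ for $p\in\underline I$, $U(\varphi(p))=T(p)$ for $p\in\underline T$, and for each $t=(p,a,d,q)\in\underline E$, $\tilde\varphi(t)=(\varphi(p),a,d,\varphi(q))\in\underline F$ with $F(\tilde\varphi(t))=E(t)$; it is surjective if $\varphi(Q)=R$, $\varphi(\underline I)=\underline J$, $\varphi(\underline T)=\underline U$, $\tilde\varphi(\underline E)=\underline F$. $\mathcal{A}$ is an in-covering of $\mathcal{B}$ if there is a surjective morphism $\varphi$ such that: for all $r\in\underline J$, $\varphi^{-1}(r)\subseteq\underline I$; for all $r\in\underline U$ there is exactly one $p\in\varphi^{-1}(r)\cap\underline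 T$; for all $t\in\underline F$ and all $q\in\varphi^{-1}(\tau(t))$ there is exactly one $t'\in\underline E$ with $\tilde\varphi(t')=t$ and $\tau(t')=q$. *)

From mathcomp Require Import all_boot all_algebra.
Set Implicit Arguments. Unset Strict Implicit. Unset Printing Implicit Defensive.

Inductive xletter (A : Type) : Type :=
  | Sym of A
  | LEnd
  | REnd.
Arguments LEnd {A}. Arguments REnd {A}.

Inductive dir : Type := dLeft | dRight .

(* A two-way K-automaton (Q, A, E, I, T) with finite state set Q.
   Partial functions into K are modelled as functions into [option K];
   the support is where the value is [Some _]. *)
Record twa (K : Type) (A : Type) (Q : finType) : Type := Twa {
  init  : Q -> option K;
  final : Q -> option K;
  trans : Q -> xletter A -> dir -> Q -> option K;
  trans_wf : forall p q, trans p LEnd dLeft q = None /\ trans p REnd dRight q = None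
}.

Definition supp {K : Type} (x : option K) : Prop := x <> None.

Definition is_morphism (K A : Type) (Q R : finType)
  (Aut : twa K A Q) (But : twa K A R) (phi : Q -> R) : Prop :=
  (forall p k, init Aut p = Some k -> init But (phi p) = Some k) /\
  (forall p k, final Aut p = Some k -> final But (phi p) = Some k) /\
  (forall p a d q k, trans Aut p a d q = Some k ->
     trans But (phi p) a d (phi q) = Some k).

Definition is_surjective_morphism (K A : Type) (Q R : finType)
  (Aut : twa K A Q) (But : twa K A R) (phi : Q -> R) : Prop :=
  is_morphism Aut But phi /\
  (forall r : R, exists p : Q, phi p = r) /\
  (forall r, supp (init But r) -> exists p, supp (init Aut p) /\ phi p = r) /\
  (forall r, supp (final But r) -> exists p, supp (final Aut p) /\ phi p = r) /\
  (forall r a d s, supp (trans But r a d s) ->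
     exists p q, supp (trans Aut p a d q) /\ phi p = r /\ phi q = s).

Definition is_in_covering_via (K A : Type) (Q R : finType)
  (Aut : twa K A Q) (But : twa K A R) (phi : Q -> R) : Prop :=
  is_surjective_morphism Aut But phi /\
  (forall r, supp (init But r) -> forall p, phi p = r -> supp (init Aut p)) /\
  (forall r, supp (final But r) ->
     exists! p, phi p = r /\ supp (final Aut p)) /\
  (forall r a d s, supp (trans But r a d s) ->
     forall q, phi q = s ->
       exists! p, supp (trans Aut p a d q) /\ phi p = r).

Definition is_in_covering (K A : Type) (Q R : finType)
  (Aut : twa K A Q) (But : twa K A R) : Prop :=
  exists phi : Q -> R, is_in_covering_via Aut But phi.

Definition delta_local (K A : Type) (Q : finType) (Aut : twa K A Q) : Prop :=
  forall p a d q a' d' q',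
    supp (trans Aut p a d q) -> supp (trans Aut p a' d' q') -> d = d'.

(* Split every state p into copies (p, d), one per direction d, and let the copy
   (p, d) keep only the outgoing transitions of p of direction d: the result is
   delta-local by construction.  Projecting onto the first component is an
   in-covering because incoming transitions are copied to every copy of their
   target, from the unique copy of their source carrying their direction; one
   distinguished copy of each final state stays final. *)
From HB Require Import structures.
From mathcomp Require Import all_boot all_algebra.

Set Implicit Arguments.
Unset Strict Implicit.
Unset Printing Implicit Defensive.

Definition bool_of_dir (d : dir) : bool := if d is dRight then true else false.
Definition dir_of_bool (b : bool) : dir := if b then dRight else dLeft.

Lemma bool_of_dirK : cancel bool_of_dir dir_of_bool.
Proof. by case. Qed.

HB.instance Definition _ := Finite.copy dir (can_type bool_of_dirK).

Section DirectionSplit.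
Variables (K A : Type) (Q : finType) (Aut : twa K A Q).

Definition dirsplit_trans (p : Q * dir) (a : xletter A) (d : dir) (q : Q * dir) :
    option K :=
  if p.2 == d then trans Aut p.1 a d q.1 else None.

Lemma dirsplit_trans_wf p q :
  dirsplit_trans p LEnd dLeft q = None /\ dirsplit_trans p REnd dRight q = None.
Proof.
by rewrite /dirsplit_trans; have [-> ->] := trans_wf Aut p.1 q.1; split; case: eqP.
Qed.

Definition dirsplit : twa K A (Q * dir)%type :=
  @Twa K A _ (fun p => init Aut p.1)
    (fun p => if p.2 == dRight then final Aut p.1 else None)
    dirsplit_trans dirsplit_trans_wf.

Lemma supp_dirsplit_trans p e a d q e' :
  supp (trans dirsplit (p, e) a d (q, e')) <-> e = d /\ supp (trans Aut p a d q).
Proof.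
rewrite /= /dirsplit_trans /=; case: eqP => [->|ne]; first by split=> [|[]].
by split=> [[]|[]] //.
Qed.

Lemma dirsplit_delta_local : delta_local dirsplit.
Proof.
move=> [p e] a d q a' d' q'; case: q q' => q f [q' f'].
by move=> /supp_dirsplit_trans[<- _] /supp_dirsplit_trans[<- _].
Qed.

Lemma dirsplit_morphism : is_morphism dirsplit Aut fst.
Proof.
split; first by [].
split; first by move=> [p [|]].
by move=> [p e] a d [q f] k /=; rewrite /dirsplit_trans /=; case: eqP.
Qed.

Lemma dirsplit_surjective_morphism : is_surjective_morphism dirsplit Aut fst.
Proof.
split; first exact: dirsplit_morphism.
split; first by move=> r; exists (r, dRight).
split; first by move=> r ?; exists (r, dRight).
split; first by move=> r ?; exists (r, dRight).
move=> r a d s supp_t; exists (r, d), (s, d).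
by split=> //; apply/supp_dirsplit_trans.
Qed.

Lemma dirsplit_in_covering : is_in_covering_via dirsplit Aut fst.
Proof.
split; first exact: dirsplit_surjective_morphism.
split; first by move=> r ? [p e] /= ->.
split.
  move=> r supp_fin; exists (r, dRight); split=> // [[p e]] /= [<-].
  by case: eqP => [-> //|_ []].
move=> r a d s supp_t [q e] /= q_s; rewrite -q_s in supp_t.
exists (r, d); split.
  by split=> //; apply/supp_dirsplit_trans.
by move=> [p f] [/supp_dirsplit_trans[-> _] /= ->].
Qed.

End DirectionSplit.

Theorem mainTheorem3 (K : pzSemiRingType) (A : finType) (Q : finType)
  (Aut : twa K A Q) :
  exists (Q' : finType) (B : twa K A Q'),
    is_in_covering B Aut /\ delta_local B.
Proof.
exists (Q * dir)%type, (dirsplit Aut); split.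
- by exists fst; apply: dirsplit_in_covering.
- exact: dirsplit_delta_local.
Qed.
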